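(* Let $\mathcal{G}=(\mathcal{V},\mathcal{E})$ be an undirected graph without self-loops, with symmetric adjacency matrix $A$ having nonnegative entries, where $A_{ij}>0$ if and only if $\{i,j\}\in\mathcal{E}$ (unweighted graphs being the case of $0/1$ entries). Let $\mathcal{V}_1\subseteq\mathcal{V}$ be a nonempty set of nodes, and let $\mathcal{V}_2\subseteq\mathcal{V}\setminus\mathcal{V}_1$ be a nonempty set of nodes such that every node of $\mathcal{V}_2$ is adjacent to at least one node of $\mathcal{V}_1$. Let $A_1$ be the $|\mathcal{V}_1|\times|\mathcal{V}_2|$ submatrix of $A$ with rows indexed by $\mathcal{V}_1$ and columns indexed by $\mathcal{V}_2$, and $A_2$ the $|\mathcal{V}_2|\times|\mathcal{V}_2|$ submatrix of $A$ indexed by $\mathcal{V}_2$. For each $v\in\mathcal{V}_2$ let $s_v>0$ be the sum of row $v$ of the $|\mathcal{V}_2|\times(|\mathcal{V}_1|+|\mathcal{V}_2|)$ matrix $(A_1^T\,|\,A_2)$, and let $\tilde{A}_1$ (of size $|\mathcal{V}_2|\times|\mathcal{V}_1|$) and $\tilde{A}_2$ (of size $|\mathcal{V}_2|\times|\mathcal{V}_2|$) be obtained from $A_1^T$ and $A_2$ respectively by dividing row $v$ by $s_v$ for each $v\in\mathcal{V}_2$. Let $f\ge 1$, let $Z_1$ be any real $|\mathcal{V}_1|\times f$ matrix, and let $Z^*=(I-\tilde{A}_2)^{-1}\tilde{A}_1 Z_1$ (the matrix $I-\tilde{A}_2$ is invertible). For an arbitrary real $|\mathcal{V}_2|\times f$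 matrix $Z^{(0)}$, define $Z^{(t)}=\tilde{A}_1 Z_1+\tilde{A}_2 Z^{(t-1)}$ for $t\ge 1$. Then $\|Z^{(t)}-Z^*\|_F\to 0$ as $t\to+\infty$ exponentially fast, i.e. there exist constants $C\ge 0$ and $\rho\in[0,1)$ such that $\|Z^{(t)}-Z^*\|_F\le C\rho^t$ for all $t\ge 0$, where $\|\cdot\|_F$ denotes the Frobenius norm.
   Context: This is the propagation step used to infer latent vectors (rows of $Z^{(t)}$) for nodes of $\mathcal{V}_2$ from already-computed latent vectors (rows of $Z_1$) for nodes of $\mathcal{V}_1$, by iterating $Z_2 = \tilde{A}_1 Z_1 + \tilde{A}_2 Z_2$; $Z^*$ is the exact solution of this linear system. *)

From HB Require Import structures.
From mathcomp Require Import all_boot all_order all_algebra.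
From mathcomp Require Import reals.
Set Implicit Arguments. Unset Strict Implicit. Unset Printing Implicit Defensive.
Import Order.TTheory GRing.Theory Num.Theory.
Local Open Scope ring_scope.

Section Defs.
Variable R : realType.
Variable n : nat.
Variables (A : 'M[R]_n) (V1 V2 : {set 'I_n}).

Definition subA1 : 'M[R]_(#|V1|, #|V2|) :=
  \matrix_(i < #|V1|, j < #|V2|) A (enum_val i) (enum_val j).
Definition subA2 : 'M[R]_(#|V2|, #|V2|) :=
  \matrix_(i < #|V2|, j < #|V2|) A (enum_val i) (enum_val j).

Definition rowsum_s (k : 'I_#|V2|) : R :=
  \sum_(j < #|V1|) (subA1^T) k j + \sum_(j < #|V2|) subA2 k j.

Definition tA1 : 'M[R]_(#|V2|, #|V1|) :=
  \matrix_(k, j) ((subA1^T) k j / rowsum_s k).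
Definition tA2 : 'M[R]_(#|V2|, #|V2|) :=
  \matrix_(k, j) (subA2 k j / rowsum_s k).

Definition Zstar (f : nat) (Z1 : 'M[R]_(#|V1|, f)) : 'M[R]_(#|V2|, f) :=
  invmx (1%:M - tA2) *m (tA1 *m Z1).

Definition Zit (f : nat) (Z1 : 'M[R]_(#|V1|, f)) (Z0 : 'M[R]_(#|V2|, f))
  (t : nat) : 'M[R]_(#|V2|, f) :=
  iter t (fun Z => tA1 *m Z1 + tA2 *m Z) Z0.
End Defs.

Definition frob (R : realType) (p q : nat) (M : 'M[R]_(p, q)) : R :=
  Num.sqrt (\sum_(i < p) \sum_(j < q) M i j ^+ 2).

From HB Require Import structures.
From mathcomp Require Import all_boot all_order all_algebra.
From mathcomp Require Import reals.
From mathcomp Require Import lra.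
Import Order.TTheory GRing.Theory Num.Theory.
Local Open Scope ring_scope.

(* The error E(t) = Z(t) - Z* obeys E(t+1) = tA2 E(t).  Since every node of V2
   has a neighbour in V1, each row of the nonnegative matrix tA2 sums to
   something strictly below 1, so tA2 is a contraction for the entrywise max
   norm with ratio rho = max of its row sums < 1.  The same contraction shows
   that I - tA2 has a trivial kernel, hence is invertible, and the max norm
   controls the Frobenius norm up to the factor sqrt(|V2| f). *)

Section MaxNorm.
Context {R : realDomainType}.

Definition mx_maxnorm {p q} (M : 'M[R]_(p, q)) : R :=
  \big[Num.max/0]_(ij : 'I_p * 'I_q) `|M ij.1 ij.2|.

Context {p q : nat}.
Implicit Type M : 'M[R]_(p, q).

Lemma mx_maxnorm_ge0 M : 0 <= mx_maxnorm M.
Proof. exact: bigmax_ge_id. Qed.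

Lemma ler_mx_maxnorm M i j : `|M i j| <= mx_maxnorm M.
Proof. exact: (le_bigmax _ _ (i, j)). Qed.

Lemma mx_maxnorm_le M c :
  0 <= c -> (forall i j, `|M i j| <= c) -> mx_maxnorm M <= c.
Proof. by move=> c_ge0 Mc; apply: bigmax_le => // -[i j] _; apply: Mc. Qed.

Lemma mx_maxnorm_le0 M : mx_maxnorm M <= 0 -> M = 0.
Proof.
move=> M_le0; apply/matrixP => i j; rewrite mxE; apply/eqP.
by rewrite -normr_le0 (le_trans (ler_mx_maxnorm M i j)).
Qed.

End MaxNorm.

Section Substochastic.
Context {R : realFieldType} {p : nat} {T : 'M[R]_p} {rho : R}.
Hypothesis T_ge0 : forall i j, 0 <= T i j.
Hypothesis rho_ge0 : 0 <= rho.
Hypothesis rowsum_le : forall i, \sum_j T i j <= rho.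

Lemma mx_maxnorm_mul {q} (E : 'M[R]_(p, q)) :
  mx_maxnorm (T *m E) <= rho * mx_maxnorm E.
Proof.
apply: mx_maxnorm_le => [|i j]; first by rewrite mulr_ge0 ?mx_maxnorm_ge0.
rewrite mxE; apply: le_trans (ler_norm_sum _ _ _) _.
apply: le_trans (ler_wpM2r (mx_maxnorm_ge0 E) (rowsum_le i)).
rewrite mulr_suml; apply: ler_sum => k _.
by rewrite normrM ger0_norm // ler_wpM2l ?ler_mx_maxnorm.
Qed.

Lemma mx_maxnorm_iter {q} t (E : 'M[R]_(p, q)) :
  mx_maxnorm (iter t (mulmx T) E) <= rho ^+ t * mx_maxnorm E.
Proof.
elim: t => [|t IHt]; first by rewrite mul1r.
rewrite iterS exprS -mulrA (le_trans (mx_maxnorm_mul _)) //.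
exact: ler_wpM2l.
Qed.

Lemma substochastic_unitmx : rho < 1 -> (1%:M - T) \in unitmx.
Proof.
move=> rho_lt1; rewrite -unitmx_tr -row_free_unit; apply: inj_row_free => v.
rewrite -[v]trmxK -trmx_mul -trmx0 => /trmx_inj.
set x := v^T; rewrite mulmxBl mul1mx => /eqP; rewrite subr_eq0 => /eqP x_fix.
have := mx_maxnorm_mul x; rewrite -x_fix => x_contr.
have x_le0 : mx_maxnorm x <= 0 by move: (mx_maxnorm_ge0 x); nra.
by move/mx_maxnorm_le0: x_le0 => ->; rewrite trmx0.
Qed.

End Substochastic.

Lemma frob_le_mx_maxnorm {R : realType} {p q} (M : 'M[R]_(p, q)) :
  frob M <= Num.sqrt (p * q)%:R * mx_maxnorm M.
Proof.
set c := mx_maxnorm M; have c_ge0 : 0 <= c := mx_maxnorm_ge0 M.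
apply: (@le_trans _ _ (Num.sqrt (\sum_(i < p) \sum_(j < q) c ^+ 2))).
  apply: ler_wsqrtr; apply: ler_sum => i _; apply: ler_sum => j _.
  by rewrite -real_normK ?num_real // lerXn2r ?nnegrE ?ler_mx_maxnorm.
rewrite !sumr_const !card_ord -mulrnA mulnC -[c ^+ 2 *+ _]mulr_natl.
by rewrite sqrtrM ?ler0n // sqrtr_sqr ger0_norm.
Qed.

Section AffineIteration.
Context {R : comUnitRingType} {p q : nat} (T : 'M[R]_p) (B : 'M[R]_(p, q)).

Lemma invmx_subr_fixpoint :
  (1%:M - T) \in unitmx ->
  invmx (1%:M - T) *m B = B + T *m (invmx (1%:M - T) *m B).
Proof.
move=> unitT; apply/eqP; rewrite -subr_eq -[X in X - _]mul1mx -mulmxBl.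
by rewrite mulKVmx.
Qed.

Lemma iter_affine_subr (Zs Z0 : 'M[R]_(p, q)) t :
  Zs = B + T *m Zs ->
  iter t (fun Z => B + T *m Z) Z0 - Zs = iter t (mulmx T) (Z0 - Zs).
Proof.
move=> Zs_fix; elim: t => [//|t IHt].
by rewrite !iterS -IHt mulmxBr {1}Zs_fix opprD addrACA subrr add0r.
Qed.

End AffineIteration.

Section Propagation.
Context {R : realType} {n : nat} {A : 'M[R]_n} {V1 V2 : {set 'I_n}}.
Hypothesis A_ge0 : forall i j, 0 <= A i j.
Hypothesis V2_adj_V1 : forall v, v \in V2 -> exists2 u, u \in V1 & 0 < A u v.

Implicit Types k j : 'I_#|V2|.

Lemma subA1_tr_rowsum_gt0 k : 0 < \sum_j (subA1 A V1 V2)^T k j.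
Proof.
have [u u_V1 Auv] := V2_adj_V1 _ (enum_valP k).
rewrite (bigD1 (enum_rank_in u_V1 u)) //= !mxE enum_rankK_in //.
by rewrite ltr_wpDr ?sumr_ge0 // => j _; rewrite !mxE.
Qed.

Lemma subA2_rowsum_ge0 k : 0 <= \sum_j subA2 A V2 k j.
Proof. by rewrite sumr_ge0 // => j _; rewrite mxE. Qed.

Lemma rowsum_s_gt0 k : 0 < rowsum_s A V1 k.
Proof. by rewrite ltr_wpDr ?subA2_rowsum_ge0 ?subA1_tr_rowsum_gt0. Qed.

Lemma tA2_ge0 k j : 0 <= tA2 A V1 V2 k j.
Proof. by rewrite !mxE; apply: divr_ge0; last exact/ltW/rowsum_s_gt0. Qed.

Lemma tA2_rowsum_lt1 k : \sum_j tA2 A V1 V2 k j < 1.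
Proof.
under eq_bigr do rewrite mxE; rewrite -mulr_suml ltr_pdivrMr ?rowsum_s_gt0 //.
by rewrite mul1r ltr_pwDl ?subA1_tr_rowsum_gt0.
Qed.

End Propagation.

Theorem theorem1 (R : realType) (n : nat) (A : 'M[R]_n)
  (V1 V2 : {set 'I_n}) (f : nat)
  (Z1 : 'M[R]_(#|V1|, f)) (Z0 : 'M[R]_(#|V2|, f)) :
  A^T = A ->
  (forall i j, 0 <= A i j) ->
  (forall i, A i i = 0) ->
  V1 != set0 ->
  V2 != set0 ->
  [disjoint V1 & V2] ->
  (forall v, v \in V2 -> exists2 u, u \in V1 & 0 < A u v) ->
  (0 < f)%N ->
  (1%:M - @tA2 R n A V1 V2) \in unitmx /\
  exists C rho : R, [/\ 0 <= C, 0 <= rho, rho < 1 &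
    forall t : nat,
      frob (@Zit R n A V1 V2 f Z1 Z0 t - @Zstar R n A V1 V2 f Z1) <= C * rho ^+ t].
Proof.
move=> _ A_ge0 _ _ _ _ V2_adj_V1 _.
set T := tA2 A V1 V2; set rho := \big[Num.max/0]_k \sum_j T k j.
have rho_ge0 : 0 <= rho := bigmax_ge_id _ _ _ _.
have rho_lt1 : rho < 1 by apply: bigmax_lt => // k _; exact: tA2_rowsum_lt1.
have rowsum_le k : \sum_j T k j <= rho := le_bigmax _ _ k.
have T_ge0 := tA2_ge0 A_ge0 V2_adj_V1.
have unitT := substochastic_unitmx T_ge0 rho_ge0 rowsum_le rho_lt1.
split => //; set Zs := Zstar A V2 Z1.
exists (Num.sqrt (#|V2| * f)%:R * mx_maxnorm (Z0 - Zs)), rho.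
split => // [|t]; first by rewrite mulr_ge0 ?sqrtr_ge0 ?mx_maxnorm_ge0.
rewrite /Zit iter_affine_subr; last exact: invmx_subr_fixpoint.
apply: le_trans (frob_le_mx_maxnorm _) _.
rewrite -mulrA ler_wpM2l ?sqrtr_ge0 // mulrC.
exact: mx_maxnorm_iter.
Qed.
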